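(* Let $M$ be the star matrix of a partition of the hypercube ${\bf Z}_q^n$ into subcubes all of the same dimension. Then in every column of $M$ each value $a\in{\bf Z}_q$ occurs the same number of times (entries $*$ are not counted).
   Context: A subcube of ${\bf Z}_q^n$ is obtained by fixing the values of some coordinates and letting the remaining coordinates run through all of ${\bf Z}_q$; its dimension is the number of free coordinates. Its star pattern is the vector of length $n$ over ${\bf Z}_q\cup\{*\}$ with the fixed value in each fixed coordinate and $*$ in each free coordinate. The star matrix of a partition of ${\bf Z}_q^n$ into subcubes (each vector lying in exactly one subcube) is the matrix whose rows are the star patterns of the subcubes of the partition. *)

From mathcomp Require Import all_boot all_order.
Set Implicit Arguments. Unset Strict Implicit. Unset Printing Implicit Defensive.

(* Z_q is represented by 'I_q; vectors of Z_q^n are {ffun 'I_n -> 'I_q}. *)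
Definition vec (q n : nat) := {ffun 'I_n -> 'I_q}.

(* A star pattern: None stands for *, Some a for a fixed coordinate a. *)
Definition star_pattern (q n : nat) := {ffun 'I_n -> option 'I_q}.

Definition in_subcube (q n : nat) (p : star_pattern q n) (x : vec q n) : bool :=
  [forall i, (p i == None) || (p i == Some (x i))].

Definition cube_dim (q n : nat) (p : star_pattern q n) : nat :=
  #|[pred i | p i == None]|.

(* The star matrix M (rows = star patterns, listed with multiplicity) is the
   star matrix of a partition of Z_q^n into subcubes: every vector lies in
   exactly one subcube (row). *)
Definition is_partition_star_matrix (q n : nat) (M : seq (star_pattern q n)) : Prop :=
  forall x : vec q n, count (fun p => in_subcube p x) M = 1.

Definition col_count (q n : nat) (M : seq (star_pattern q n)) (j : 'I_n) (a : 'I_q) : nat :=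
  count (fun p : star_pattern q n => p j == Some a) M.

From mathcomp Require Import all_boot all_order.

(* Count the vectors with [x j = a] along the partition.  A subcube that is
   free in coordinate [j] contains a number of them that does not depend on
   [a]; a subcube with [j]-th entry [c] contains [q ^ d] of them if [c = a]
   and none otherwise.  As the total number [q ^ n.-1] of such vectors does
   not depend on [a] either, neither does [col_count M j a * q ^ d]. *)

Section Subcubes.

Set Implicit Arguments.
Unset Strict Implicit.

Variables q n : nat.

Definition fix_coord (p : star_pattern q n) (j : 'I_n) (a : 'I_q) : star_pattern q n :=
  [ffun i => if i == j then Some a else p i].

Definition slice_card (p : star_pattern q n) (j : 'I_n) (a : 'I_q) : nat :=
  #|[pred x : vec q n | in_subcube p x && (x j == a)]|.

Lemma card_subcube (p : star_pattern q n) :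
  #|[pred x : vec q n | in_subcube p x]| = q ^ cube_dim p.
Proof.
pose F (i : 'I_n) : pred 'I_q := if p i is Some c then pred1 c else predT.
have -> : #|[pred x : vec q n | in_subcube p x]| = #|family F|.
  apply: eq_card => x; rewrite !inE; apply/forallP/familyP => H i;
    have := H i; rewrite /F; case: (p i) => [c|] //= /eqP.
  - by move=> [->]; rewrite inE.
  - by move->.
rewrite card_family foldrE big_map big_enum /cube_dim -prod_nat_const.
rewrite big_mkcond [RHS]big_mkcond; apply: eq_bigr => i _ /=.
by rewrite /F inE; case: (p i) => [c|]; rewrite ?card1 ?card_ord.
Qed.

Lemma in_subcube_fix_coord (p : star_pattern q n) j a (x : vec q n) :
  p j = None -> in_subcube (fix_coord p j a) x = in_subcube p x && (x j == a).
Proof.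
move=> pj; apply/forallP/andP => [H | [/forallP H /eqP xa] i].
- split.
  + apply/forallP => i; have := H i; rewrite ffunE.
    by case: (i =P j) => [->|]; rewrite ?pj.
  + by have := H j; rewrite ffunE eqxx /= => /eqP [->].
- by rewrite ffunE; case: (i =P j) => [->|]; rewrite ?xa ?eqxx ?orbT.
Qed.

Lemma cube_dim_fix_coord (p : star_pattern q n) j a b :
  cube_dim (fix_coord p j a) = cube_dim (fix_coord p j b).
Proof. by apply: eq_card => i; rewrite !inE !ffunE; case: (i == j). Qed.

Lemma slice_card_free (p : star_pattern q n) j a b :
  p j = None -> slice_card p j a = slice_card p j b.
Proof.
move=> pj; have slice_fix c : slice_card p j c = q ^ cube_dim (fix_coord p j c).
  by rewrite -card_subcube; apply: eq_card => x; rewrite !inE in_subcube_fix_coord.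
by rewrite !slice_fix (cube_dim_fix_coord _ _ a b).
Qed.

Lemma slice_card_pinned (p : star_pattern q n) j a :
  p j != None -> slice_card p j a = (p j == Some a) * q ^ cube_dim p.
Proof.
case pj: (p j) => [c|] // _; rewrite -card_subcube.
have in_pj x : in_subcube p x -> x j = c.
  by move=> /forallP/(_ j); rewrite pj /= => /eqP [].
have [<- | ne_ca] := eqVneq c a.
- rewrite eqxx mul1n; apply: eq_card => x; rewrite !inE.
  by case: (boolP (in_subcube p x)) => // /in_pj ->; rewrite eqxx.
- rewrite (inj_eq Some_inj) (negbTE ne_ca) mul0n.
  apply: eq_card0 => x; rewrite !inE; apply/andP => -[/in_pj ->].
  by rewrite (negbTE ne_ca).
Qed.

Lemma card_coord_eq (j : 'I_n) (a b : 'I_q) :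
  #|[pred x : vec q n | x j == a]| = #|[pred x : vec q n | x j == b]|.
Proof.
pose p0 : star_pattern q n := [ffun => None].
have all_in x : in_subcube p0 x by apply/forallP => i; rewrite ffunE.
have slice_p0 c : #|[pred x : vec q n | x j == c]| = slice_card p0 j c.
  by apply: eq_card => x; rewrite !inE all_in.
by rewrite !slice_p0; apply: slice_card_free; rewrite ffunE.
Qed.

Section Partition.

Variables (M : seq (star_pattern q n)) (d : nat).
Hypothesis partM : is_partition_star_matrix M.
Hypothesis dimM : forall p, p \in M -> cube_dim p = d.

Lemma card_partition (P : pred (vec q n)) :
  #|P| = \sum_(p <- M) #|[pred x | in_subcube p x && P x]|.
Proof.
rewrite -sum1_card; under eq_bigr => x _ do rewrite -(partM x) -sum1_count.
rewrite (exchange_big_dep predT) //=; apply: eq_bigr => p _.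
by rewrite -sum1_card; apply: eq_bigl => x; rewrite !inE andbC.
Qed.

Lemma card_coord_partition (j : 'I_n) (a : 'I_q) :
  #|[pred x : vec q n | x j == a]| =
  \sum_(p <- M | p j == None) slice_card p j a + col_count M j a * q ^ d.
Proof.
rewrite card_partition (bigID (fun p : star_pattern q n => p j == None)) /=.
congr (_ + _).
transitivity (\sum_(p <- M | p j != None) (p j == Some a) * q ^ d).
  rewrite big_seq_cond [RHS]big_seq_cond; apply: eq_bigr => p /andP [pM pj].
  by rewrite -(dimM pM); apply: slice_card_pinned.
rewrite -big_distrl /col_count -sum1_count; congr (_ * _).
rewrite [LHS]big_mkcond [RHS]big_mkcond; apply: eq_bigr => p _.
by case: (p j) => [c|] //=; case: (c == a).
Qed.

End Partition.

End Subcubes.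

Theorem lemma2 (q n : nat) (M : seq (star_pattern q n)) (d : nat) :
  is_partition_star_matrix M ->
  (forall p, p \in M -> cube_dim p = d) ->
  forall (j : 'I_n) (a b : 'I_q), col_count M j a = col_count M j b.
Proof.
move=> partM dimM j a b.
have q_gt0 : 0 < q := leq_ltn_trans (leq0n a) (ltn_ord a).
have free_sum_eq : \sum_(p <- M | p j == None) slice_card p j a =
                   \sum_(p <- M | p j == None) slice_card p j b.
  by apply: eq_bigr => p /eqP; apply: slice_card_free.
have := card_coord_eq j a b.
rewrite !(card_coord_partition partM dimM) free_sum_eq => /addnI /eqP.
by rewrite eqn_pmul2r ?expn_gt0 ?q_gt0 // => /eqP.
Qed.
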